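(* Consider the system of ordinary differential equations \[ \dot u=r_{1}u(1-u)-a_{12}uv-a_{13}uw,\qquad \dot v=r_{2}v(1-v)+a_{21}uv,\qquad \dot w=-\mu w+a_{31}uw, \] with all parameters $r_1,r_2,\mu,a_{12},a_{13},a_{21},a_{31}$ positive. Assume \[ r_{1}r_{2}a_{31}-r_{1}r_{2}\mu-a_{12}a_{31}r_{2}-a_{12}a_{21}\mu>0 . \] Then the positive equilibrium \[ E_{*}=(u_{*},v_{*},w_{*})=\left(\frac{\mu}{a_{31}},\;1+\frac{a_{21}\mu}{a_{31}r_{2}},\;\frac{r_{1}r_{2}a_{31}-r_{1}r_{2}\mu-a_{12}a_{31}r_{2}-a_{12}a_{21}\mu}{a_{13}a_{31}r_{2}}\right) \] exists and it is globally asymptotically stable, i.e. it is stable and every solution with $u(0),v(0),w(0)>0$ converges to $E_*$ as $t\to\infty$.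
   Context: $u,v,w$ denote population densities of three species; solutions are considered in the positive orthant. *)

From Stdlib Require Import Reals.
From Coquelicot Require Import Coquelicot.
Open Scope R_scope.

Definition fu (r1 a12 a13 : R) (u v w : R) : R := r1 * u * (1 - u) - a12 * u * v - a13 * u * w.
Definition fv (r2 a21 : R) (u v w : R) : R := r2 * v * (1 - v) + a21 * u * v.
Definition fw (mu a31 : R) (u v w : R) : R := - mu * w + a31 * u * w.

Definition is_solution (r1 r2 mu a12 a13 a21 a31 : R) (u v w : R -> R) : Prop :=
  forall t, 0 <= t ->
    is_derive u t (fu r1 a12 a13 (u t) (v t) (w t)) /\
    is_derive v t (fv r2 a21 (u t) (v t) (w t)) /\
    is_derive w t (fw mu a31 (u t) (v t) (w t)).

Definition ustar (mu a31 : R) : R := mu / a31.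
Definition vstar (r2 mu a21 a31 : R) : R := 1 + a21 * mu / (a31 * r2).
Definition wstar (r1 r2 mu a12 a13 a21 a31 : R) : R :=
  (r1 * r2 * a31 - r1 * r2 * mu - a12 * a31 * r2 - a12 * a21 * mu) / (a13 * a31 * r2).

Definition dist3 (x y z x0 y0 z0 : R) : R :=
  Rmax (Rabs (x - x0)) (Rmax (Rabs (y - y0)) (Rabs (z - z0))).

From Stdlib Require Import Reals Lra Psatz Classical.
From Coquelicot Require Import Coquelicot.
Open Scope R_scope.

(* With Φ_s(x) = x - s - s ln(x/s) and E* = (ū, v̄, w̄), the function
     V(u,v,w) = Φ_ū(u) + (a12/a21) Φ_v̄(v) + (a13/a31) Φ_w̄(w)
   satisfies V' = - r1 (u - ū)^2 - (a12 r2/a21) (v - v̄)^2 <= 0 along solutions.  Its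
   sublevel sets are compact subsets of the open orthant, so solutions stay positive and
   bounded, hence uniformly Lipschitz, and E* is stable.  As V is bounded below while
   V' <= - r1 (u - ū)^2, the Lipschitz function u cannot stay away from ū on infinitely many
   windows of fixed length, so u -> ū, and likewise v -> v̄.  Finally u' = a13 u (h - (w - w̄))
   with h -> 0: if w stayed away from w̄ on a window of fixed length, u would move by a fixed
   amount there, contradicting u -> ū. *)

Lemma ln_le_sub_1 x : 0 < x -> ln x <= x - 1.
Proof.
  intros Hx. pose proof (exp_ineq1_le (ln x)) as H. rewrite exp_ln in H; lra.
Qed.

Lemma ln_lt_sub_1 x : 0 < x -> x <> 1 -> ln x < x - 1.
Proof.
  intros Hx Hx1.
  assert (Hln : ln x <> 0) by (intros E; apply Hx1; rewrite <- (exp_ln x Hx), E; apply exp_0).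
  pose proof (exp_ineq1 (ln x) Hln) as H. rewrite exp_ln in H; lra.
Qed.

Lemma is_lim_p_infty_spec (f : R -> R) (l : R) :
  is_lim f p_infty l <-> forall eps, 0 < eps -> exists T, forall t, T <= t -> Rabs (f t - l) < eps.
Proof.
  rewrite <- is_lim_spec. split.
  - intros H eps Heps. destruct (H (mkposreal eps Heps)) as [T HT].
    exists (T + 1). intros t Ht. apply HT. lra.
  - intros H eps. destruct (H eps (cond_pos eps)) as [T HT].
    exists T. intros t Ht. apply HT. lra.
Qed.

Lemma is_lim_of_sub_tends_to_0 (f : R -> R) (l : R) :
  is_lim (fun t => f t - l) p_infty 0 -> is_lim f p_infty l.
Proof.
  rewrite !is_lim_p_infty_spec. intros H eps Heps.
  destruct (H eps Heps) as [T HT]. exists T. intros t Ht.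
  specialize (HT t Ht). rewrite Rminus_0_r in HT. exact HT.
Qed.

Lemma half_line_induction (P : R -> Prop) :
  (forall t, 0 <= t -> (forall s, 0 <= s < t -> P s) ->
     exists d, 0 < d /\ forall s, t <= s < t + d -> P s) ->
  forall t, 0 <= t -> P t.
Proof.
  intros Hstep t1 Ht1. apply NNPP. intros Hn.
  set (E := fun x => 0 <= x /\ forall s, 0 <= s < x -> P s).
  assert (Hbound : bound E).
  { exists t1. intros x [Hx HP]. apply Rnot_lt_le. intros Hlt. apply Hn, HP. lra. }
  assert (HE0 : E 0) by (split; [lra | intros s Hs; lra]).
  destruct (completeness E Hbound (ex_intro _ 0 HE0)) as [T [HTub HTlub]].
  assert (HT0 : 0 <= T) by (apply HTub, HE0).
  assert (HPT : forall s, 0 <= s < T -> P s).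
  { intros s Hs. apply NNPP. intros HnPs.
    assert (T <= s); [|lra].
    apply HTlub. intros x [Hx HPx]. apply Rnot_lt_le. intros Hlt. apply HnPs, HPx. lra. }
  destruct (Hstep T HT0 HPT) as [d [Hd HPd]].
  assert (E (T + d)).
  { split; [lra|]. intros s Hs. destruct (Rlt_le_dec s T); [apply HPT | apply HPd]; lra. }
  assert (T + d <= T) by (apply HTub; assumption). lra.
Qed.

Lemma continuous_locally_between (f : R -> R) t a b :
  continuous f t -> a < f t < b ->
  exists d, 0 < d /\ forall s, Rabs (s - t) < d -> a < f s < b.
Proof.
  intros Hf Hab.
  assert (Hloc : locally t (fun s => a < f s < b)).
  { apply (Hf (fun y => a < y < b)). apply (locally_interval _ _ a b); simpl; tauto. }
  destruct Hloc as [d Hd]. exists d. split; [apply cond_pos | exact Hd].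
Qed.

Lemma continuous_lower_bound_left (f : R -> R) a t m :
  continuous f t -> a < t -> (forall s, a <= s < t -> m <= f s) -> m <= f t.
Proof.
  intros Hf Hat Hm. apply Rnot_lt_le. intros Hlt.
  assert (Hloc : locally t (fun s => f s < m)).
  { apply (Hf (fun y => y < m)). apply (locally_interval _ _ m_infty m); simpl; auto. }
  destruct Hloc as [d Hd].
  set (s := Rmax a (t - d / 2)).
  assert (Has : a <= s) by apply Rmax_l.
  assert (Hs : t - d / 2 <= s) by apply Rmax_r.
  assert (Hst : s < t) by (apply Rmax_lub_lt; pose proof (cond_pos d); lra).
  assert (f s < m).
  { apply Hd. change (Rabs (s - t) < d). rewrite Rabs_left by lra.
    pose proof (cond_pos d); lra. }
  specialize (Hm s (conj Has Hst)). lra.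
Qed.

Lemma mean_value (f df : R -> R) a b :
  a <= b -> (forall x, a <= x <= b -> is_derive f x (df x)) ->
  exists c, a <= c <= b /\ f b - f a = df c * (b - a).
Proof.
  intros Hab Hd.
  destruct (MVT_gen f a b df) as [c [Hc E]];
    rewrite ?Rmin_left, ?Rmax_right in * by lra.
  - intros x Hx. apply Hd. lra.
  - intros x Hx. apply derivable_continuous_pt. exists (df x).
    apply is_derive_Reals, Hd. lra.
  - exists c. split; assumption.
Qed.

Lemma derive_ge_increment (f df : R -> R) a b k :
  a <= b -> (forall x, a <= x <= b -> is_derive f x (df x)) ->
  (forall x, a <= x <= b -> k <= df x) -> k * (b - a) <= f b - f a.
Proof.
  intros Hab Hd Hk. destruct (mean_value f df a b Hab Hd) as [c [Hc ->]].
  apply Rmult_le_compat_r; [lra | apply Hk, Hc].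
Qed.

Lemma derive_le_increment (f df : R -> R) a b k :
  a <= b -> (forall x, a <= x <= b -> is_derive f x (df x)) ->
  (forall x, a <= x <= b -> df x <= k) -> f b - f a <= k * (b - a).
Proof.
  intros Hab Hd Hk. destruct (mean_value f df a b Hab Hd) as [c [Hc ->]].
  apply Rmult_le_compat_r; [lra | apply Hk, Hc].
Qed.

Lemma derive_bounded_lipschitz (f df : R -> R) a b K :
  a <= b -> (forall x, a <= x <= b -> is_derive f x (df x)) ->
  (forall x, a <= x <= b -> Rabs (df x) <= K) -> Rabs (f b - f a) <= K * (b - a).
Proof.
  intros Hab Hd HK.
  assert (Hdf : forall x, a <= x <= b -> - K <= df x <= K)
    by (intros x Hx; apply Rabs_le_between, HK, Hx).
  apply Rabs_le_between. split.
  - assert (- K * (b - a) <= f b - f a); [|lra].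
    apply (derive_ge_increment f df); auto. apply Hdf.
  - apply (derive_le_increment f df); auto. apply Hdf.
Qed.

Lemma inf_nonneg_half_line (V : R -> R) :
  (forall t, 0 <= t -> 0 <= V t) ->
  exists L, (forall t, 0 <= t -> L <= V t) /\
    (forall d, 0 < d -> exists t0, 0 <= t0 /\ V t0 < L + d).
Proof.
  intros HV. set (E := fun y => exists t, 0 <= t /\ y = - V t).
  assert (Hbound : bound E).
  { exists 0. intros y [t [Ht ->]]. specialize (HV t Ht). lra. }
  assert (HE : exists y, E y) by (exists (- V 0), 0; split; [lra | reflexivity]).
  destruct (completeness E Hbound HE) as [S [HSub HSlub]].
  exists (- S). split.
  - intros t Ht. assert (- V t <= S) by (apply HSub; exists t; auto). lra.
  - intros d Hd. apply NNPP. intros Hn.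
    assert (S <= S - d); [|lra].
    apply HSlub. intros y [t [Ht ->]].
    assert (~ V t < - S + d) by (intros Hlt; apply Hn; exists t; auto). lra.
Qed.

Lemma lipschitz_window (g : R -> R) K eps t s : 0 < K ->
  (forall a b, 0 <= a <= b -> Rabs (g b - g a) <= K * (b - a)) ->
  0 <= t <= s -> s <= t + eps / (2 * K) -> Rabs (g s - g t) <= eps / 2.
Proof.
  intros HK Hlip Hts Hs. eapply Rle_trans; [apply Hlip; lra|].
  assert (Hstep : K * (s - t) <= K * (eps / (2 * K))) by (apply Rmult_le_compat_l; lra).
  replace (K * (eps / (2 * K))) with (eps / 2) in Hstep by (field; lra). exact Hstep.
Qed.

Lemma is_lim_p_infty_cauchy (f : R -> R) (l : R) : is_lim f p_infty l ->
  forall eps, 0 < eps -> exists T, forall s t, T <= s -> T <= t -> Rabs (f s - f t) < eps.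
Proof.
  rewrite is_lim_p_infty_spec. intros Hf eps Heps.
  destruct (Hf (eps / 2) ltac:(lra)) as [T HT]. exists T. intros s t Hs Ht.
  replace (f s - f t) with ((f s - l) + - (f t - l)) by ring.
  eapply Rle_lt_trans; [apply Rabs_triang|]. rewrite Rabs_Ropp.
  pose proof (HT s Hs). pose proof (HT t Ht). lra.
Qed.

Lemma lyapunov_lipschitz_tends_to_0 (V dV g : R -> R) c K :
  0 < c -> 0 < K ->
  (forall t, 0 <= t -> 0 <= V t) ->
  (forall t, 0 <= t -> is_derive V t (dV t)) ->
  (forall t, 0 <= t -> dV t <= - c * g t ^ 2) ->
  (forall a b, 0 <= a <= b -> Rabs (g b - g a) <= K * (b - a)) ->
  is_lim g p_infty 0.
Proof.
  intros Hc HK HV HdV Hdecay Hlip. apply is_lim_p_infty_spec. intros eps Heps.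
  destruct (inf_nonneg_half_line V HV) as [L [HL Happrox]].
  set (tau := eps / (2 * K)).
  assert (Htau : 0 < tau) by (unfold tau; apply Rdiv_lt_0_compat; lra).
  set (d := c * (eps / 2) ^ 2 * tau).
  assert (Hd : 0 < d).
  { unfold d. apply Rmult_lt_0_compat; [apply Rmult_lt_0_compat; [lra | apply pow_lt; lra] | lra]. }
  destruct (Happrox d Hd) as [t0 [Ht0 HVt0]].
  exists t0. intros t Ht. rewrite Rminus_0_r. apply Rnot_le_lt. intros Hgt.
  assert (Hwindow : forall s, t <= s <= t + tau -> (eps / 2) ^ 2 <= g s ^ 2).
  { intros s Hs. pose proof (lipschitz_window g K eps t s HK Hlip ltac:(lra) ltac:(unfold tau in *; lra)).
    pose proof (Rabs_triang_inv (g t) (g s)). rewrite Rabs_minus_sym in H.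
    rewrite <- (pow2_abs (g s)). nra. }
  assert (Hdrop : V (t + tau) - V t <= - (c * (eps / 2) ^ 2) * (t + tau - t)).
  { apply (derive_le_increment V dV); [lra | intros s Hs; apply HdV; lra |].
    intros s Hs. specialize (Hdecay s ltac:(lra)). specialize (Hwindow s Hs). nra. }
  assert (Hmono : V t - V t0 <= 0 * (t - t0)).
  { apply (derive_le_increment V dV); [lra | intros s Hs; apply HdV; lra |].
    intros s Hs. specialize (Hdecay s ltac:(lra)). pose proof (pow2_ge_0 (g s)). nra. }
  specialize (HL (t + tau) ltac:(lra)).
  replace (- (c * (eps / 2) ^ 2) * (t + tau - t)) with (- d) in Hdrop by (unfold d; ring).
  lra.
Qed.

Lemma derivative_factor_tends_to_0 (x p h z : R -> R) (l m K : R) :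
  0 < m -> 0 < K ->
  is_lim x p_infty l ->
  (forall t, 0 <= t -> is_derive x t (p t * (h t - z t))) ->
  (forall t, 0 <= t -> m <= p t) ->
  is_lim h p_infty 0 ->
  (forall a b, 0 <= a <= b -> Rabs (z b - z a) <= K * (b - a)) ->
  is_lim z p_infty 0.
Proof.
  intros Hm HK Hx Hdx Hp Hh Hlip. apply is_lim_p_infty_spec. intros eps Heps.
  set (tau := eps / (2 * K)).
  assert (Htau : 0 < tau) by (unfold tau; apply Rdiv_lt_0_compat; lra).
  set (d := m * (eps / 4) * tau).
  assert (Hd : 0 < d) by (unfold d; apply Rmult_lt_0_compat; [apply Rmult_lt_0_compat | ]; lra).
  destruct (is_lim_p_infty_cauchy x l Hx d Hd) as [T1 HT1].
  rewrite is_lim_p_infty_spec in Hh. destruct (Hh (eps / 4) ltac:(lra)) as [T2 HT2].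
  exists (Rmax 0 (Rmax T1 T2)). intros t Ht.
  pose proof (Rmax_l 0 (Rmax T1 T2)). pose proof (Rmax_r 0 (Rmax T1 T2)).
  pose proof (Rmax_l T1 T2). pose proof (Rmax_r T1 T2).
  rewrite Rminus_0_r. apply Rnot_le_lt. intros Hzt.
  assert (Hwindow : forall s, t <= s <= t + tau -> - (eps / 2) <= z s - z t <= eps / 2).
  { intros s Hs. apply Rabs_le_between, (lipschitz_window z K); [exact HK | exact Hlip | lra |].
    unfold tau in *; lra. }
  assert (Hhs : forall s, t <= s -> - (eps / 4) <= h s <= eps / 4).
  { intros s Hs. specialize (HT2 s ltac:(lra)). rewrite Rminus_0_r in HT2.
    apply Rabs_le_between. lra. }
  pose proof (HT1 (t + tau) t ltac:(lra) ltac:(lra)) as Hxstep.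
  apply Rabs_lt_between in Hxstep.
  unfold Rabs in Hzt. destruct (Rcase_abs (z t)) as [Hneg | Hpos].
  - assert (Hrise : m * (eps / 4) * (t + tau - t) <= x (t + tau) - x t).
    { apply (derive_ge_increment x (fun s => p s * (h s - z s))); [lra | intros s Hs; apply Hdx; lra |].
      intros s Hs. pose proof (Hwindow s Hs). pose proof (Hhs s ltac:(lra)).
      pose proof (Hp s ltac:(lra)). nra. }
    replace (t + tau - t) with tau in Hrise by ring. unfold d in Hxstep. lra.
  - assert (Hfall : x (t + tau) - x t <= - (m * (eps / 4)) * (t + tau - t)).
    { apply (derive_le_increment x (fun s => p s * (h s - z s))); [lra | intros s Hs; apply Hdx; lra |].
      intros s Hs. pose proof (Hwindow s Hs). pose proof (Hhs s ltac:(lra)).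
      pose proof (Hp s ltac:(lra)). nra. }
    replace (t + tau - t) with tau in Hfall by ring. unfold d in Hxstep. lra.
Qed.

Definition volterra (s x : R) : R := x - s - s * ln (x / s).

Lemma volterra_self s : 0 < s -> volterra s s = 0.
Proof. intros Hs. unfold volterra. rewrite Rdiv_diag by lra. rewrite ln_1. ring. Qed.

Lemma volterra_nonneg s x : 0 < s -> 0 < x -> 0 <= volterra s x.
Proof.
  intros Hs Hx. unfold volterra.
  pose proof (ln_le_sub_1 (x / s) (Rdiv_lt_0_compat _ _ Hx Hs)) as Hln.
  apply (Rmult_le_compat_l s) in Hln; [|lra].
  replace (s * (x / s - 1)) with (x - s) in Hln by (field; lra). lra.
Qed.

Lemma volterra_pos s x : 0 < s -> 0 < x -> x <> s -> 0 < volterra s x.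
Proof.
  intros Hs Hx Hxs. unfold volterra.
  assert (Hxs1 : x / s <> 1) by (intros E; apply Hxs; field_simplify_eq in E; lra).
  pose proof (ln_lt_sub_1 (x / s) (Rdiv_lt_0_compat _ _ Hx Hs) Hxs1) as Hln.
  apply (Rmult_lt_compat_l s) in Hln; [|lra].
  replace (s * (x / s - 1)) with (x - s) in Hln by (field; lra). lra.
Qed.

Lemma is_derive_volterra s x : 0 < s -> 0 < x -> is_derive (volterra s) x (1 - s / x).
Proof.
  intros Hs Hx. unfold volterra. auto_derive.
  - apply Rdiv_lt_0_compat; lra.
  - field. lra.
Qed.

Lemma is_derive_volterra_comp s (f : R -> R) t df : 0 < s -> 0 < f t -> is_derive f t df ->
  is_derive (fun r => volterra s (f r)) t (df * (1 - s / f t)).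
Proof.
  intros Hs Hf Hdf. apply (is_derive_comp (volterra s) f t _ _); [|exact Hdf].
  apply is_derive_volterra; assumption.
Qed.

Lemma volterra_le_lower s x B : 0 < s -> 0 < x -> volterra s x <= B -> s * exp (- (B + s) / s) <= x.
Proof.
  intros Hs Hx HB. unfold volterra in HB.
  assert (Hxs : 0 < x / s) by (apply Rdiv_lt_0_compat; lra).
  assert (Hln : - (B + s) / s <= ln (x / s)).
  { apply (Rmult_le_reg_l s); [lra|].
    replace (s * (- (B + s) / s)) with (- (B + s)) by (field; lra). lra. }
  apply Rnot_lt_le. intros Hlt.
  assert (Hlt' : x / s < exp (- (B + s) / s)).
  { apply (Rmult_lt_reg_l s); [lra|]. replace (s * (x / s)) with x by (field; lra). exact Hlt. }
  apply ln_increasing in Hlt'; [|exact Hxs]. rewrite ln_exp in Hlt'. lra.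
Qed.

Lemma volterra_le_upper s x B : 0 < s -> 0 < x -> volterra s x <= B -> x <= 2 * (B + s).
Proof.
  intros Hs Hx HB. unfold volterra in HB.
  (* ln y <= y / 2, from ln (y / 2) <= y / 2 - 1 and ln 2 <= 1 *)
  assert (Hln : ln (x / s) <= x / s / 2).
  { replace (ln (x / s)) with (ln (x / s / 2) + ln 2)
      by (rewrite ln_div; [ring | apply Rdiv_lt_0_compat | ]; lra).
    pose proof (ln_le_sub_1 (x / s / 2) ltac:(apply Rdiv_lt_0_compat; [apply Rdiv_lt_0_compat|]; lra)).
    pose proof (ln_le_sub_1 2 ltac:(lra)). lra. }
  apply (Rmult_le_compat_l s) in Hln; [|lra].
  replace (s * (x / s / 2)) with (x / 2) in Hln by (field; lra). lra.
Qed.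

Lemma volterra_lt_near s m : 0 < s -> 0 < m ->
  exists d, 0 < d /\ forall x, Rabs (x - s) < d -> volterra s x < m.
Proof.
  intros Hs Hm.
  assert (Hcont : continuous (volterra s) s)
    by (apply (@ex_derive_continuous R_AbsRing R_NormedModule); eexists; apply is_derive_volterra; lra).
  destruct (continuous_locally_between (volterra s) s (- 1) m Hcont) as [d [Hd Hnear]].
  - rewrite volterra_self by lra. lra.
  - exists d. split; [exact Hd|]. intros x Hx. apply Hnear, Hx.
Qed.

Lemma volterra_lt_close s eps : 0 < s -> 0 < eps ->
  exists m, 0 < m /\ forall x, 0 < x -> volterra s x < m -> Rabs (x - s) < eps.
Proof.
  (* [volterra s] decreases on (0, s] and increases on [s, +oo). *)
  intros Hs Heps. set (e := Rmin eps (s / 2)).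
  assert (He : 0 < e) by (apply Rmin_pos; lra).
  assert (Hee : e <= eps) by apply Rmin_l.
  assert (Hes : e <= s / 2) by apply Rmin_r.
  assert (Hdv : forall y, 0 < y -> is_derive (volterra s) y (1 - s / y))
    by (intros y Hy; apply is_derive_volterra; lra).
  exists (Rmin (volterra s (s + e)) (volterra s (s - e))). split.
  { apply Rmin_pos; apply volterra_pos; lra. }
  intros x Hx Hlt. apply Rnot_le_lt. intros Hfar.
  destruct (Rle_or_lt s x) as [Hsx | Hxs].
  - rewrite Rabs_right in Hfar by lra.
    assert (0 * (x - (s + e)) <= volterra s x - volterra s (s + e)).
    { apply (derive_ge_increment _ (fun y => 1 - s / y)); [lra | intros y Hy; apply Hdv; lra |].
      intros y Hy. assert (s / y <= 1); [|lra].
      rewrite <- Rdiv_le_1 by lra. lra. }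
    pose proof (Rmin_l (volterra s (s + e)) (volterra s (s - e))). lra.
  - rewrite Rabs_left in Hfar by lra.
    assert (volterra s (s - e) - volterra s x <= 0 * (s - e - x)).
    { apply (derive_le_increment _ (fun y => 1 - s / y)); [lra | intros y Hy; apply Hdv; lra |].
      intros y Hy. assert (1 <= s / y); [|lra].
      apply (Rmult_le_reg_r y); [lra|]. field_simplify; lra. }
    pose proof (Rmin_r (volterra s (s + e)) (volterra s (s - e))). lra.
Qed.

Lemma dist3_lt_iff x y z x0 y0 z0 d :
  dist3 x y z x0 y0 z0 < d <-> Rabs (x - x0) < d /\ Rabs (y - y0) < d /\ Rabs (z - z0) < d.
Proof. unfold dist3. rewrite !Rmax_Rlt. tauto. Qed.

Section ThreeSpecies.

Variables r1 r2 mu a12 a13 a21 a31 : R.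
Hypotheses (Hr1 : 0 < r1) (Hr2 : 0 < r2) (Hmu : 0 < mu) (Ha12 : 0 < a12)
  (Ha13 : 0 < a13) (Ha21 : 0 < a21) (Ha31 : 0 < a31)
  (Hcond : r1 * r2 * a31 - r1 * r2 * mu - a12 * a31 * r2 - a12 * a21 * mu > 0).

Let us := ustar mu a31.
Let vs := vstar r2 mu a21 a31.
Let ws := wstar r1 r2 mu a12 a13 a21 a31.

Lemma ustar_pos : 0 < us.
Proof. unfold us, ustar. apply Rdiv_lt_0_compat; lra. Qed.

Lemma vstar_pos : 0 < vs.
Proof.
  unfold vs, vstar. assert (0 < a21 * mu / (a31 * r2)); [|lra].
  apply Rdiv_lt_0_compat; apply Rmult_lt_0_compat; lra.
Qed.

Lemma wstar_pos : 0 < ws.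
Proof.
  unfold ws, wstar. apply Rdiv_lt_0_compat; [lra|].
  repeat apply Rmult_lt_0_compat; lra.
Qed.

Lemma fu_factor x y z :
  fu r1 a12 a13 x y z = x * (- r1 * (x - us) - a12 * (y - vs) - a13 * (z - ws)).
Proof. unfold fu, us, vs, ws, ustar, vstar, wstar. field. repeat split; lra. Qed.

Lemma fv_factor x y z : fv r2 a21 x y z = y * (- r2 * (y - vs) + a21 * (x - us)).
Proof. unfold fv, us, vs, ustar, vstar. field. repeat split; lra. Qed.

Lemma fw_factor x y z : fw mu a31 x y z = z * (a31 * (x - us)).
Proof. unfold fw, us, ustar. field. lra. Qed.

Lemma equilibrium_rest_point :
  fu r1 a12 a13 us vs ws = 0 /\ fv r2 a21 us vs ws = 0 /\ fw mu a31 us vs ws = 0.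
Proof. rewrite fu_factor, fv_factor, fw_factor. repeat split; ring. Qed.

(* These weights make the u v and u w terms cancel in the derivative of [lyapunov]. *)
Let c2 := a12 / a21.
Let c3 := a13 / a31.

Lemma c2_pos : 0 < c2.
Proof. unfold c2. apply Rdiv_lt_0_compat; lra. Qed.

Lemma c3_pos : 0 < c3.
Proof. unfold c3. apply Rdiv_lt_0_compat; lra. Qed.

Definition lyapunov (x y z : R) : R :=
  volterra us x + c2 * volterra vs y + c3 * volterra ws z.

Lemma lyapunov_ge_components x y z : 0 < x -> 0 < y -> 0 < z ->
  volterra us x <= lyapunov x y z /\ c2 * volterra vs y <= lyapunov x y z /\
  c3 * volterra ws z <= lyapunov x y z.
Proof.
  intros Hx Hy Hz. unfold lyapunov.
  pose proof (volterra_nonneg us x ustar_pos Hx).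
  pose proof (Rmult_le_pos _ _ (Rlt_le _ _ c2_pos) (volterra_nonneg vs y vstar_pos Hy)).
  pose proof (Rmult_le_pos _ _ (Rlt_le _ _ c3_pos) (volterra_nonneg ws z wstar_pos Hz)).
  repeat split; lra.
Qed.

Lemma lyapunov_nonneg x y z : 0 < x -> 0 < y -> 0 < z -> 0 <= lyapunov x y z.
Proof.
  intros Hx Hy Hz. destruct (lyapunov_ge_components x y z Hx Hy Hz) as [H _].
  pose proof (volterra_nonneg us x ustar_pos Hx). lra.
Qed.

Lemma lyapunov_sublevel_bounded B : exists m M, 0 < m /\
  forall x y z, 0 < x -> 0 < y -> 0 < z -> lyapunov x y z <= B ->
    m <= x <= M /\ m <= y <= M /\ m <= z <= M.
Proof.
  pose proof ustar_pos as Hus. pose proof vstar_pos as Hvs. pose proof wstar_pos as Hws.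
  pose proof c2_pos as Hc2. pose proof c3_pos as Hc3.
  set (lo s B' := s * exp (- (B' + s) / s)).
  set (m := Rmin (lo us B) (Rmin (lo vs (B / c2)) (lo ws (B / c3)))).
  set (M := Rmax (2 * (B + us)) (Rmax (2 * (B / c2 + vs)) (2 * (B / c3 + ws)))).
  exists m, M. split.
  { unfold m, lo. repeat apply Rmin_pos; apply Rmult_lt_0_compat; auto; apply exp_pos. }
  intros x y z Hx Hy Hz HB.
  destruct (lyapunov_ge_components x y z Hx Hy Hz) as [Bx [By Bz]].
  assert (Bx' : volterra us x <= B) by lra.
  assert (By' : volterra vs y <= B / c2)
    by (apply (Rmult_le_reg_l c2); [lra|]; replace (c2 * (B / c2)) with B by (field; lra); lra).
  assert (Bz' : volterra ws z <= B / c3)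
    by (apply (Rmult_le_reg_l c3); [lra|]; replace (c3 * (B / c3)) with B by (field; lra); lra).
  pose proof (volterra_le_lower us x B Hus Hx Bx'). pose proof (volterra_le_upper us x B Hus Hx Bx').
  pose proof (volterra_le_lower vs y _ Hvs Hy By'). pose proof (volterra_le_upper vs y _ Hvs Hy By').
  pose proof (volterra_le_lower ws z _ Hws Hz Bz'). pose proof (volterra_le_upper ws z _ Hws Hz Bz').
  pose proof (Rmin_l (lo us B) (Rmin (lo vs (B / c2)) (lo ws (B / c3)))).
  pose proof (Rmin_r (lo us B) (Rmin (lo vs (B / c2)) (lo ws (B / c3)))).
  pose proof (Rmin_l (lo vs (B / c2)) (lo ws (B / c3))).
  pose proof (Rmin_r (lo vs (B / c2)) (lo ws (B / c3))).
  pose proof (Rmax_l (2 * (B + us)) (Rmax (2 * (B / c2 + vs)) (2 * (B / c3 + ws)))).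
  pose proof (Rmax_r (2 * (B + us)) (Rmax (2 * (B / c2 + vs)) (2 * (B / c3 + ws)))).
  pose proof (Rmax_l (2 * (B / c2 + vs)) (2 * (B / c3 + ws))).
  pose proof (Rmax_r (2 * (B / c2 + vs)) (2 * (B / c3 + ws))).
  unfold m, M, lo in *. repeat split; lra.
Qed.
Lemma lyapunov_lt_close eps : 0 < eps -> exists m, 0 < m /\
  forall x y z, 0 < x -> 0 < y -> 0 < z -> lyapunov x y z < m -> dist3 x y z us vs ws < eps.
Proof.
  intros Heps. pose proof c2_pos as Hc2. pose proof c3_pos as Hc3.
  destruct (volterra_lt_close us eps ustar_pos Heps) as [mx [Hmx Hx_close]].
  destruct (volterra_lt_close vs eps vstar_pos Heps) as [my [Hmy Hy_close]].
  destruct (volterra_lt_close ws eps wstar_pos Heps) as [mz [Hmz Hz_close]].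
  exists (Rmin mx (Rmin (c2 * my) (c3 * mz))). split.
  { repeat apply Rmin_pos; try apply Rmult_lt_0_compat; lra. }
  intros x y z Hx Hy Hz Hlt.
  pose proof (Rmin_l mx (Rmin (c2 * my) (c3 * mz))).
  pose proof (Rmin_r mx (Rmin (c2 * my) (c3 * mz))).
  pose proof (Rmin_l (c2 * my) (c3 * mz)). pose proof (Rmin_r (c2 * my) (c3 * mz)).
  destruct (lyapunov_ge_components x y z Hx Hy Hz) as [Bx [By Bz]].
  apply dist3_lt_iff. repeat split.
  - apply Hx_close; [exact Hx | lra].
  - apply Hy_close; [exact Hy|]. apply (Rmult_lt_reg_l c2); lra.
  - apply Hz_close; [exact Hz|]. apply (Rmult_lt_reg_l c3); lra.
Qed.

Lemma lyapunov_lt_near m : 0 < m -> exists d, 0 < d /\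
  forall x y z, dist3 x y z us vs ws < d -> lyapunov x y z < m.
Proof.
  intros Hm. pose proof c2_pos as Hc2. pose proof c3_pos as Hc3.
  destruct (volterra_lt_near us (m / 3) ustar_pos ltac:(lra)) as [dx [Hdx Hx_near]].
  destruct (volterra_lt_near vs (m / 3 / c2) vstar_pos ltac:(apply Rdiv_lt_0_compat; lra))
    as [dy [Hdy Hy_near]].
  destruct (volterra_lt_near ws (m / 3 / c3) wstar_pos ltac:(apply Rdiv_lt_0_compat; lra))
    as [dz [Hdz Hz_near]].
  exists (Rmin dx (Rmin dy dz)). split; [repeat apply Rmin_pos; assumption|].
  intros x y z Hd. apply dist3_lt_iff in Hd. destruct Hd as [Hx [Hy Hz]].
  pose proof (Rmin_l dx (Rmin dy dz)). pose proof (Rmin_r dx (Rmin dy dz)).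
  pose proof (Rmin_l dy dz). pose proof (Rmin_r dy dz).
  specialize (Hx_near x ltac:(lra)). specialize (Hy_near y ltac:(lra)).
  specialize (Hz_near z ltac:(lra)).
  apply (Rmult_lt_compat_l c2) in Hy_near; [|lra].
  apply (Rmult_lt_compat_l c3) in Hz_near; [|lra].
  replace (c2 * (m / 3 / c2)) with (m / 3) in Hy_near by (field; lra).
  replace (c3 * (m / 3 / c3)) with (m / 3) in Hz_near by (field; lra).
  unfold lyapunov. lra.
Qed.

Lemma lyapunov_lie_derivative x y z : 0 < x -> 0 < y -> 0 < z ->
  fu r1 a12 a13 x y z * (1 - us / x) + c2 * (fv r2 a21 x y z * (1 - vs / y))
    + c3 * (fw mu a31 x y z * (1 - ws / z))
  = - r1 * (x - us) ^ 2 - c2 * r2 * (y - vs) ^ 2.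
Proof.
  intros Hx Hy Hz. rewrite fu_factor, fv_factor, fw_factor. unfold c2, c3.
  field. repeat split; lra.
Qed.

Lemma is_derive_lyapunov (x y z : R -> R) t dx dy dz :
  0 < x t -> 0 < y t -> 0 < z t ->
  is_derive x t dx -> is_derive y t dy -> is_derive z t dz ->
  is_derive (fun r => lyapunov (x r) (y r) (z r)) t
    (dx * (1 - us / x t) + c2 * (dy * (1 - vs / y t)) + c3 * (dz * (1 - ws / z t))).
Proof.
  intros Hx Hy Hz Hdx Hdy Hdz. unfold lyapunov.
  apply (is_derive_plus (fun r => volterra us (x r) + c2 * volterra vs (y r))
                        (fun r => c3 * volterra ws (z r))).
  - apply (is_derive_plus (fun r => volterra us (x r)) (fun r => c2 * volterra vs (y r))).
    + apply is_derive_volterra_comp; [apply ustar_pos | assumption..].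
    + apply (is_derive_scal (fun r => volterra vs (y r))).
      apply is_derive_volterra_comp; [apply vstar_pos | assumption..].
  - apply (is_derive_scal (fun r => volterra ws (z r))).
    apply is_derive_volterra_comp; [apply wstar_pos | assumption..].
Qed.

Lemma field_bounded_on_box M : 0 <= M -> exists K, 0 < K /\
  forall x y z, 0 <= x <= M -> 0 <= y <= M -> 0 <= z <= M ->
    Rabs (fu r1 a12 a13 x y z) <= K /\ Rabs (fv r2 a21 x y z) <= K /\
    Rabs (fw mu a31 x y z) <= K.
Proof.
  intros HM.
  exists ((r1 + r2) * M * (1 + M) + (a12 + a13 + a21 + a31) * M * M + mu * M + 1). split.
  { assert (0 <= (r1 + r2) * M * (1 + M)) by (apply Rmult_le_pos; [apply Rmult_le_pos|]; lra).
    assert (0 <= (a12 + a13 + a21 + a31) * M * M) by (apply Rmult_le_pos; [apply Rmult_le_pos|]; lra).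
    assert (0 <= mu * M) by (apply Rmult_le_pos; lra). lra. }
  intros x y z Hx Hy Hz. unfold fu, fv, fw.
  assert (0 <= x * x <= M * M) by (split; nra). assert (0 <= x * y <= M * M) by (split; nra).
  assert (0 <= x * z <= M * M) by (split; nra). assert (0 <= y * y <= M * M) by (split; nra).
  repeat split; apply Rabs_le_between; split; nra.
Qed.

Section Trajectory.

Variables u v w : R -> R.
Hypothesis Hsol : is_solution r1 r2 mu a12 a13 a21 a31 u v w.
Hypotheses (Hu0 : 0 < u 0) (Hv0 : 0 < v 0) (Hw0 : 0 < w 0).

Let V t := lyapunov (u t) (v t) (w t).
Let dV t := - r1 * (u t - us) ^ 2 - c2 * r2 * (v t - vs) ^ 2.

Lemma is_derive_lyapunov_solution t : 0 <= t -> 0 < u t -> 0 < v t -> 0 < w t ->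
  is_derive V t (dV t).
Proof.
  intros Ht Hu Hv Hw. destruct (Hsol t Ht) as [Du [Dv Dw]].
  unfold dV. rewrite <- (lyapunov_lie_derivative (u t) (v t) (w t)) by assumption.
  apply is_derive_lyapunov; assumption.
Qed.

Lemma dissipation_le_u t : dV t <= - r1 * (u t - us) ^ 2.
Proof.
  unfold dV. pose proof c2_pos. pose proof (pow2_ge_0 (v t - vs)).
  assert (0 <= c2 * r2 * (v t - vs) ^ 2) by (apply Rmult_le_pos; [apply Rmult_le_pos|]; lra).
  lra.
Qed.

Lemma dissipation_le_v t : dV t <= - (c2 * r2) * (v t - vs) ^ 2.
Proof.
  unfold dV. pose proof (pow2_ge_0 (u t - us)).
  assert (0 <= r1 * (u t - us) ^ 2) by (apply Rmult_le_pos; lra).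
  lra.
Qed.

Lemma lyapunov_solution_nonincreasing a b : 0 <= a <= b ->
  (forall s, a <= s <= b -> 0 < u s /\ 0 < v s /\ 0 < w s) -> V b <= V a.
Proof.
  intros Hab Hpos.
  assert (V b - V a <= 0 * (b - a)); [|lra].
  apply (derive_le_increment V dV); [lra | |].
  - intros s Hs. destruct (Hpos s Hs) as [Hu [Hv Hw]].
    apply is_derive_lyapunov_solution; [lra | assumption..].
  - intros s Hs. pose proof (dissipation_le_u s). pose proof (pow2_ge_0 (u s - us)).
    assert (0 <= r1 * (u s - us) ^ 2) by (apply Rmult_le_pos; lra).
    lra.
Qed.

Lemma solution_continuous t : 0 <= t -> continuous u t /\ continuous v t /\ continuous w t.
Proof.
  intros Ht. destruct (Hsol t Ht) as [Du [Dv Dw]].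
  repeat split; apply (@ex_derive_continuous R_AbsRing R_NormedModule); eexists; eassumption.
Qed.

Lemma solution_pos t : 0 <= t -> 0 < u t /\ 0 < v t /\ 0 < w t.
Proof.
  destruct (lyapunov_sublevel_bounded (V 0)) as [m [M [Hm Hsub]]].
  revert t. apply half_line_induction. intros t Ht Hbefore.
  destruct (solution_continuous t Ht) as [Cu [Cv Cw]].
  assert (Hpos_t : 0 < u t /\ 0 < v t /\ 0 < w t).
  { destruct (Req_dec t 0) as [-> | Ht0]; [auto|].
    assert (Hlow : forall s, 0 <= s < t -> m <= u s /\ m <= v s /\ m <= w s).
    { intros s Hs. destruct (Hbefore s Hs) as [Hu [Hv Hw]].
      assert (HV : V s <= V 0)
        by (apply lyapunov_solution_nonincreasing; [lra | intros r Hr; apply Hbefore; lra]).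
      destruct (Hsub (u s) (v s) (w s) Hu Hv Hw HV) as [[Hu' _] [[Hv' _] [Hw' _]]].
      auto. }
    assert (m <= u t) by (apply (continuous_lower_bound_left u 0); [assumption | lra | apply Hlow]).
    assert (m <= v t) by (apply (continuous_lower_bound_left v 0); [assumption | lra | apply Hlow]).
    assert (m <= w t) by (apply (continuous_lower_bound_left w 0); [assumption | lra | apply Hlow]).
    lra. }
  destruct Hpos_t as [Hu [Hv Hw]].
  destruct (continuous_locally_between u t 0 (u t + 1) Cu ltac:(lra)) as [du [Hdu Hnu]].
  destruct (continuous_locally_between v t 0 (v t + 1) Cv ltac:(lra)) as [dv [Hdv Hnv]].
  destruct (continuous_locally_between w t 0 (w t + 1) Cw ltac:(lra)) as [dw [Hdw Hnw]].
  exists (Rmin du (Rmin dv dw)). split; [repeat apply Rmin_pos; assumption|].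
  intros s Hs.
  pose proof (Rmin_l du (Rmin dv dw)). pose proof (Rmin_r du (Rmin dv dw)).
  pose proof (Rmin_l dv dw). pose proof (Rmin_r dv dw).
  assert (Rabs (s - t) < Rmin du (Rmin dv dw)) by (rewrite Rabs_right; lra).
  repeat split; [apply Hnu | apply Hnv | apply Hnw]; lra.
Qed.

Lemma lyapunov_solution_le t : 0 <= t -> V t <= V 0.
Proof.
  intros Ht. apply lyapunov_solution_nonincreasing; [lra|].
  intros s Hs. apply solution_pos. lra.
Qed.

Lemma solution_bounded : exists m M, 0 < m /\
  forall t, 0 <= t -> m <= u t <= M /\ m <= v t <= M /\ m <= w t <= M.
Proof.
  destruct (lyapunov_sublevel_bounded (V 0)) as [m [M [Hm Hsub]]].
  exists m, M. split; [exact Hm|]. intros t Ht.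
  destruct (solution_pos t Ht) as [Hu [Hv Hw]].
  apply Hsub; [assumption.. | apply lyapunov_solution_le, Ht].
Qed.

Lemma solution_lipschitz : exists K, 0 < K /\ forall a b, 0 <= a <= b ->
  Rabs (u b - u a) <= K * (b - a) /\ Rabs (v b - v a) <= K * (b - a) /\
  Rabs (w b - w a) <= K * (b - a).
Proof.
  destruct solution_bounded as [m [M [Hm Hbd]]].
  assert (HM : 0 <= M) by (destruct (Hbd 0 ltac:(lra)) as [[_ ?] _]; lra).
  destruct (field_bounded_on_box M HM) as [K [HK Hfield]].
  exists K. split; [exact HK|]. intros a b Hab.
  assert (Hf : forall s, a <= s <= b ->
    Rabs (fu r1 a12 a13 (u s) (v s) (w s)) <= K /\ Rabs (fv r2 a21 (u s) (v s) (w s)) <= K /\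
    Rabs (fw mu a31 (u s) (v s) (w s)) <= K).
  { intros s Hs. destruct (Hbd s ltac:(lra)) as [? [? ?]]. apply Hfield; lra. }
  destruct Hab as [Ha Hab].
  repeat split.
  - apply (derive_bounded_lipschitz u (fun s => fu r1 a12 a13 (u s) (v s) (w s))); [exact Hab | |].
    + intros s Hs. apply (Hsol s). lra.
    + intros s Hs. apply (Hf s Hs).
  - apply (derive_bounded_lipschitz v (fun s => fv r2 a21 (u s) (v s) (w s))); [exact Hab | |].
    + intros s Hs. apply (Hsol s). lra.
    + intros s Hs. apply (Hf s Hs).
  - apply (derive_bounded_lipschitz w (fun s => fw mu a31 (u s) (v s) (w s))); [exact Hab | |].
    + intros s Hs. apply (Hsol s). lra.
    + intros s Hs. apply (Hf s Hs).
Qed.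

Lemma u_sub_tends_to_0 : is_lim (fun t => u t - us) p_infty 0.
Proof.
  destruct solution_lipschitz as [K [HK Hlip]].
  apply (lyapunov_lipschitz_tends_to_0 V dV _ r1 K Hr1 HK).
  - intros t Ht. destruct (solution_pos t Ht) as [Hu [Hv Hw]].
    apply lyapunov_nonneg; assumption.
  - intros t Ht. destruct (solution_pos t Ht) as [Hu [Hv Hw]].
    apply is_derive_lyapunov_solution; assumption.
  - intros t _. apply dissipation_le_u.
  - intros a b Hab. replace (u b - us - (u a - us)) with (u b - u a) by ring. apply Hlip, Hab.
Qed.

Lemma v_sub_tends_to_0 : is_lim (fun t => v t - vs) p_infty 0.
Proof.
  destruct solution_lipschitz as [K [HK Hlip]].
  pose proof c2_pos.
  apply (lyapunov_lipschitz_tends_to_0 V dV _ (c2 * r2) K ltac:(apply Rmult_lt_0_compat; lra) HK).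
  - intros t Ht. destruct (solution_pos t Ht) as [Hu [Hv Hw]].
    apply lyapunov_nonneg; assumption.
  - intros t Ht. destruct (solution_pos t Ht) as [Hu [Hv Hw]].
    apply is_derive_lyapunov_solution; assumption.
  - intros t _. apply dissipation_le_v.
  - intros a b Hab. replace (v b - vs - (v a - vs)) with (v b - v a) by ring. apply Hlip, Hab.
Qed.

Lemma w_sub_tends_to_0 : is_lim (fun t => w t - ws) p_infty 0.
Proof.
  destruct solution_lipschitz as [K [HK Hlip]].
  destruct solution_bounded as [m [M [Hm Hbd]]].
  set (h t := (- r1 / a13) * (u t - us) + (- a12 / a13) * (v t - vs)).
  apply (derivative_factor_tends_to_0 u (fun t => a13 * u t) h _ us (a13 * m) K);
    [apply Rmult_lt_0_compat; lra | exact HK | | | | |].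
  - apply is_lim_of_sub_tends_to_0, u_sub_tends_to_0.
  - intros t Ht. destruct (Hsol t Ht) as [Du _].
    replace (a13 * u t * (h t - (w t - ws))) with (fu r1 a12 a13 (u t) (v t) (w t));
      [exact Du|].
    rewrite fu_factor. unfold h. field. lra.
  - intros t Ht. destruct (Hbd t Ht) as [[Hu _] _]. apply Rmult_le_compat_l; lra.
  - replace (Finite 0) with (Finite ((- r1 / a13) * 0 + (- a12 / a13) * 0)) by (f_equal; ring).
    apply is_lim_plus'.
    + exact (is_lim_scal_l _ (- r1 / a13) _ _ u_sub_tends_to_0).
    + exact (is_lim_scal_l _ (- a12 / a13) _ _ v_sub_tends_to_0).
  - intros a b Hab. replace (w b - ws - (w a - ws)) with (w b - w a) by ring. apply Hlip, Hab.
Qed.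

End Trajectory.

Lemma equilibrium_stable eps : 0 < eps -> exists delta, 0 < delta /\
  forall u v w : R -> R,
    is_solution r1 r2 mu a12 a13 a21 a31 u v w ->
    0 < u 0 -> 0 < v 0 -> 0 < w 0 ->
    dist3 (u 0) (v 0) (w 0) us vs ws < delta ->
    forall t, 0 <= t -> dist3 (u t) (v t) (w t) us vs ws < eps.
Proof.
  intros Heps.
  destruct (lyapunov_lt_close eps Heps) as [m [Hm Hclose]].
  destruct (lyapunov_lt_near m Hm) as [delta [Hdelta Hnear]].
  exists delta. split; [exact Hdelta|].
  intros u v w Hsol Hu0 Hv0 Hw0 Hd0 t Ht.
  destruct (solution_pos u v w Hsol Hu0 Hv0 Hw0 t Ht) as [Hu [Hv Hw]].
  apply Hclose; [assumption.. |].
  pose proof (lyapunov_solution_le u v w Hsol Hu0 Hv0 Hw0 t Ht).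
  pose proof (Hnear _ _ _ Hd0). lra.
Qed.

Lemma solution_tends_to_equilibrium (u v w : R -> R) :
  is_solution r1 r2 mu a12 a13 a21 a31 u v w ->
  0 < u 0 -> 0 < v 0 -> 0 < w 0 ->
  is_lim u p_infty us /\ is_lim v p_infty vs /\ is_lim w p_infty ws.
Proof.
  intros Hsol Hu0 Hv0 Hw0.
  repeat split; apply is_lim_of_sub_tends_to_0.
  - apply (u_sub_tends_to_0 u v w); assumption.
  - apply (v_sub_tends_to_0 u v w); assumption.
  - apply (w_sub_tends_to_0 u v w); assumption.
Qed.

End ThreeSpecies.

Theorem theorem2 (r1 r2 mu a12 a13 a21 a31 : R)
  (Hr1 : 0 < r1) (Hr2 : 0 < r2) (Hmu : 0 < mu) (Ha12 : 0 < a12)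
  (Ha13 : 0 < a13) (Ha21 : 0 < a21) (Ha31 : 0 < a31)
  (Hcond : r1 * r2 * a31 - r1 * r2 * mu - a12 * a31 * r2 - a12 * a21 * mu > 0) :
  let us := ustar mu a31 in
  let vs := vstar r2 mu a21 a31 in
  let ws := wstar r1 r2 mu a12 a13 a21 a31 in
  (* existence: E_* lies in the positive orthant and is an equilibrium *)
  (0 < us /\ 0 < vs /\ 0 < ws /\
   fu r1 a12 a13 us vs ws = 0 /\ fv r2 a21 us vs ws = 0 /\ fw mu a31 us vs ws = 0) /\
  (* Lyapunov stability (for solutions in the positive orthant) *)
  (forall eps, 0 < eps -> exists delta, 0 < delta /\
     forall u v w : R -> R,
       is_solution r1 r2 mu a12 a13 a21 a31 u v w ->
       0 < u 0 -> 0 < v 0 -> 0 < w 0 ->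
       dist3 (u 0) (v 0) (w 0) us vs ws < delta ->
       forall t, 0 <= t -> dist3 (u t) (v t) (w t) us vs ws < eps) /\
  (* global attractivity *)
  (forall u v w : R -> R,
     is_solution r1 r2 mu a12 a13 a21 a31 u v w ->
     0 < u 0 -> 0 < v 0 -> 0 < w 0 ->
     is_lim u p_infty us /\ is_lim v p_infty vs /\ is_lim w p_infty ws).
Proof.
  intros us vs ws. split; [|split].
  - split; [apply ustar_pos; assumption|].
    split; [apply vstar_pos; assumption|].
    split; [apply wstar_pos; assumption|].
    apply equilibrium_rest_point; assumption.
  - apply equilibrium_stable; assumption.
  - intros u v w. apply solution_tends_to_equilibrium; assumption.
Qed.
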